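(* Let $k\geq 8$ and $2k+1\leq n\leq 3k$ be integers, and let $h(n,k)=\binom{n-1}{k-1}-\binom{n-k-1}{k-1}+1$. Then \[ \binom{n-2}{k-2}+2\binom{n-3}{k-2}+\frac{h(n,k)^2}{\binom{n-2}{k-2}+2\binom{n-3}{k-2}}>2\binom{n-1}{k-1}. \] *)

From mathcomp Require Import all_boot all_order all_algebra.
Set Implicit Arguments. Unset Strict Implicit. Unset Printing Implicit Defensive.
Import Order.TTheory GRing.Theory Num.Theory.
Local Open Scope ring_scope.

Definition h (n k : nat) : rat :=
  ('C(n.-1, k.-1))%:R - ('C(n - k - 1, k.-1))%:R + 1.

(* Write n = 2k + j with 1 <= j <= k, N = C(n-1, k-1), c = C(n-k-1, k-1) and
   D = C(n-2, k-2) + 2 C(n-3, k-2).  The absorption identities for binomial coefficients give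
   (N - D)(n-1)(n-2) = N (n-2k)(n-k), and D^2 + h^2 - 2ND = (N - D)^2 - 2N(c - 1) + (c - 1)^2
   with h = N - c + 1, so it suffices that 2Nc <= (N - D)^2, i.e. that the ratio
   N (j(k+j))^2 / (c ((n-1)(n-2))^2) is at least 2.  Moving from (k, j) to (k+1, j), or
   from (k, k) to (k+1, k+1), multiplies this ratio by an explicit rational function of
   k and j that is at least 1, so it suffices to check the ratio at k = 8, 1 <= j <= 8. *)

From mathcomp Require Import all_boot all_order all_algebra.
From mathcomp Require Import zify ring lra.
Set Implicit Arguments. Unset Strict Implicit. Unset Printing Implicit Defensive.
Import Order.TTheory GRing.Theory Num.Theory.
Local Open Scope ring_scope.

Definition kfactor (R : fieldType) (K J : R) : R :=
  (K + J + 1) * ((2 * K + J - 1) * (2 * K + J - 2)) ^+ 2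
  / ((K + J) ^+ 3 * (2 * K + J) * (2 * K + J + 1)).

Definition jfactor (R : fieldType) (K J : R) : R :=
  (J + 1) ^+ 3 * (K + J + 1) * (2 * K + J - 2) ^+ 2 / (J ^+ 2 * (K + J) ^+ 3 * (2 * K + J)).

Lemma kfactor_ge1 (R : realFieldType) (K J : R) : 4 <= K -> 0 <= J -> 1 <= kfactor K J.
Proof.
move=> K_ge4 J_ge0; rewrite /kfactor.
set x := K + J; set y := 2 * K + J.
have x_gt0 : 0 < x by rewrite /x; lra.
have y_gt0 : 0 < y by rewrite /y; lra.
rewrite ler_pdivlMr ?mul1r; last by rewrite !mulr_gt0 ?exprn_gt0 //; lra.
have m_ge : (y + 1) * x <= (y - 1) * (y - 2) by rewrite /x /y; nra.
have m_sqr_ge : ((y + 1) * x) ^+ 2 <= ((y - 1) * (y - 2)) ^+ 2.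
  by rewrite !expr2 ler_pM // mulr_ge0 //; lra.
apply: le_trans (ler_wpM2l _ m_sqr_ge); last lra.
have : 0 <= x ^+ 2 * (y + 1) * (x + y + 1) by rewrite !mulr_ge0 ?sqr_ge0 //; lra.
lra.
Qed.

Lemma kfactor_jfactor_diag_ge1 (R : realFieldType) (K : R) :
  2 <= K -> 1 <= kfactor K K * jfactor (K + 1) K.
Proof.
move=> K_ge2.
have -> : kfactor K K * jfactor (K + 1) K = 3 * (K + 1) ^+ 4 * ((3 * K - 1) * (3 * K - 2)) ^+ 2
    / (4 * K ^+ 4 * (3 * K + 1) * (3 * K + 2) * (2 * K + 1) ^+ 2).
  by rewrite /kfactor /jfactor; field; rewrite !gt_eqF //; lra.
rewrite ler_pdivlMr ?mul1r; last by rewrite !mulr_gt0 ?exprn_gt0 //; lra.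
(* After K = t + 2 the difference is a polynomial in t with positive coefficients. *)
have [t t_ge0 ->] : exists2 t, 0 <= t & K = t + 2 by exists (K - 2); [lra | ring].
have := exprn_ge0 2 t_ge0; have := exprn_ge0 3 t_ge0; have := exprn_ge0 4 t_ge0.
have := exprn_ge0 5 t_ge0; have := exprn_ge0 6 t_ge0; have := exprn_ge0 7 t_ge0.
have := exprn_ge0 8 t_ge0.
lra.
Qed.

Lemma gap_identity (R : comPzRingType) (n k N a b : R) :
  (n - 1) * a = (k - 1) * N -> (n - 2) * b = (n - k) * a ->
  (N - (a + 2 * b)) * ((n - 1) * (n - 2)) = N * ((n - 2 * k) * (n - k)).
Proof.
move=> e1 e2.
have e1' : (n - 1) * (n - 2) * a = (n - 2) * (k - 1) * N by rewrite -mulrA mulrCA e1 mulrA.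
have e2' : (n - 1) * (n - 2) * b = (n - k) * (k - 1) * N by rewrite -mulrA e2 mulrCA e1 mulrA.
transitivity (N * ((n - 1) * (n - 2)) - (n - 1) * (n - 2) * a - 2 * ((n - 1) * (n - 2) * b)).
  by ring.
by rewrite e1' e2'; ring.
Qed.

Lemma gap_lower_bound (R : realFieldType) (N c D m q : R) : 0 < N -> 0 < D -> m != 0 ->
  (N - D) * m = N * q -> 2 * c * m ^+ 2 <= N * q ^+ 2 -> 2 * N < D + (N - c + 1) ^+ 2 / D.
Proof.
move=> N_gt0 D_gt0 m_neq0 gapE gap_ge.
have gap_sqr : 2 * N * c <= (N - D) ^+ 2.
  have m2_gt0 : 0 < m ^+ 2 by rewrite exprn_even_gt0 // m_neq0 orbT.
  rewrite -(ler_pM2r m2_gt0) -exprMn gapE.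
  have := ler_wpM2l (ltW N_gt0) gap_ge; lra.
have -> : D + (N - c + 1) ^+ 2 / D = (D ^+ 2 + (N - c + 1) ^+ 2) / D.
  by field; rewrite gt_eqF.
rewrite ltr_pdivlMr //.
have := sqr_ge0 (c - 1); lra.
Qed.

Definition Nbin (k j : nat) : nat := 'C((2 * k + j).-1, k.-1).
Definition cbin (k j : nat) : nat := 'C((k + j).-1, k.-1).

Lemma cbin_gt0 k j : (0 < cbin k j)%N.
Proof. by rewrite bin_gt0; lia. Qed.

Lemma Nbin_succ_k k j : (0 < k)%N ->
  (Nbin k.+1 j * (k * (k + j + 1)) = Nbin k j * ((2 * k + j + 1) * (2 * k + j)))%N.
Proof.
case: k => // p _; rewrite /Nbin [p.+2.-1]/= [p.+1.-1]/=.
have -> : (2 * p.+2 + j).-1 = (2 * p + j).+3 by lia.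
have -> : (2 * p.+1 + j).-1 = (2 * p + j).+1 by lia.
move: (mul_bin_diag (2 * p + j).+3 p) (mul_bin_down (2 * p + j).+2 p); rewrite !succnK.
rewrite (_ : (2 * p + j).+2 - p = p + j + 2)%N; [nia | lia].
Qed.

Lemma cbin_succ_k k j : (0 < k)%N -> (cbin k.+1 j * k = cbin k j * (k + j))%N.
Proof.
case: k => // p _; rewrite /cbin [p.+2.-1]/= [p.+1.-1]/= !addSn [(p + j).+2.-1]/=.
by rewrite mulnC -mul_bin_diag mulnC.
Qed.

Lemma Nbin_succ_j k j : (0 < k)%N ->
  (Nbin k j.+1 * (k + j + 1) = Nbin k j * (2 * k + j))%N.
Proof.
case: k => // p _; rewrite /Nbin [p.+1.-1]/=.
have -> : (2 * p.+1 + j.+1).-1 = (2 * p + j).+2 by lia.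
have -> : (2 * p.+1 + j).-1 = (2 * p + j).+1 by lia.
move: (mul_bin_down (2 * p + j).+2 p); rewrite succnK.
rewrite (_ : (2 * p + j).+2 - p = p + j + 2)%N; lia.
Qed.

Lemma cbin_succ_j k j : (0 < k)%N -> (cbin k j.+1 * (j + 1) = cbin k j * (k + j))%N.
Proof.
case: k => // p _; rewrite /cbin [p.+1.-1]/= !addSn addnS [(p + j).+2.-1]/= [(p + j).+1.-1]/=.
move: (mul_bin_down (p + j).+1 p); rewrite succnK.
rewrite (_ : (p + j).+1 - p = j + 1)%N; lia.
Qed.

Lemma bin_gap_identity (R : comPzRingType) (n k : nat) : (2 <= k <= n)%N ->
  (('C(n - 1, k - 1))%:R - (('C(n - 2, k - 2))%:R + 2 * ('C(n - 3, k - 2))%:R))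
    * ((n%:R - 1) * (n%:R - 2))
  = ('C(n - 1, k - 1))%:R * ((n%:R - 2 * k%:R) * (n%:R - k%:R)) :> R.
Proof.
move=> /andP[k_ge2 k_le_n]; apply: gap_identity.
- have := mul_bin_diag (n - 1) (k - 2).
  rewrite -subn1 -subnDA (_ : (k - 2).+1 = k - 1)%N; last lia.
  move/(congr1 (GRing.natmul (1 : R))); rewrite !natrM !natrB //; lia.
- have := mul_bin_down (n - 2) (k - 2).
  rewrite -subn1 -subnDA (_ : n - 2 - (k - 2) = n - k)%N; last lia.
  move/(congr1 (GRing.natmul (1 : R))); rewrite !natrM !natrB //; lia.
Qed.

Definition gap_ratio (k j : nat) : rat :=
  (Nbin k j)%:R * (j%:R * (k%:R + j%:R)) ^+ 2
  / ((cbin k j)%:R * ((2 * k%:R + j%:R - 1) * (2 * k%:R + j%:R - 2)) ^+ 2).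

Lemma gap_ratio_ge0 k j : 0 <= gap_ratio k j.
Proof. by rewrite /gap_ratio divr_ge0 // mulr_ge0 ?sqr_ge0. Qed.

Lemma two_le_gap_ratioE k j : (0 < k)%N -> (0 < j)%N ->
  (2 <= gap_ratio k j) =
  (2 * (cbin k j)%:R * ((2 * k%:R + j%:R - 1) * (2 * k%:R + j%:R - 2)) ^+ 2
   <= (Nbin k j)%:R * (j%:R * (k%:R + j%:R)) ^+ 2 :> rat).
Proof.
move=> k_gt0 j_gt0; have K_ge1 : 1 <= k%:R :> rat by rewrite ler1n.
have J_ge1 : 1 <= j%:R :> rat by rewrite ler1n.
have m_gt0 : 0 < (2 * k%:R + j%:R - 1) * (2 * k%:R + j%:R - 2) :> rat by apply: mulr_gt0; lra.
have den_gt0 : 0 < (cbin k j)%:R * ((2 * k%:R + j%:R - 1) * (2 * k%:R + j%:R - 2)) ^+ 2 :> rat.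
  by rewrite mulr_gt0 ?exprn_gt0 // ltr0n cbin_gt0.
by rewrite ler_pdivlMr // mulrA.
Qed.

Lemma gap_ratio_succ_k k j : (0 < k)%N -> (0 < j)%N ->
  gap_ratio k.+1 j = gap_ratio k j * kfactor k%:R j%:R.
Proof.
move=> k_gt0 j_gt0.
have := congr1 (GRing.natmul (1 : rat)) (Nbin_succ_k j k_gt0).
have := congr1 (GRing.natmul (1 : rat)) (cbin_succ_k j k_gt0).
have := cbin_gt0 k j; have := cbin_gt0 k.+1 j.
rewrite /gap_ratio /kfactor -natr1 !(natrM, natrD) -!(ltr0n rat).
move: k_gt0 j_gt0; rewrite -!(ler1n rat).
set K := k%:R; set J := j%:R; set N := (Nbin k j)%:R; set N' := (Nbin k.+1 j)%:R.
set c := (cbin k j)%:R; set c' := (cbin k.+1 j)%:R.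
move=> K_ge1 J_ge1 c'_gt0 c_gt0 ec eN.
have -> : N' = N * ((2 * K + J + 1) * (2 * K + J)) / (K * (K + J + 1)).
  by rewrite -eN mulfK // mulf_neq0 ?gt_eqF //; lra.
have -> : c' = c * (K + J) / K by rewrite -ec mulfK // gt_eqF //; lra.
by field; rewrite -/K -/J -/c !gt_eqF //; lra.
Qed.

Lemma gap_ratio_succ_j k j : (0 < k)%N -> (0 < j)%N ->
  gap_ratio k j.+1 = gap_ratio k j * jfactor k%:R j%:R.
Proof.
move=> k_gt0 j_gt0.
have := congr1 (GRing.natmul (1 : rat)) (Nbin_succ_j j k_gt0).
have := congr1 (GRing.natmul (1 : rat)) (cbin_succ_j j k_gt0).
have := cbin_gt0 k j; have := cbin_gt0 k j.+1.
rewrite /gap_ratio /jfactor -natr1 !(natrM, natrD) -!(ltr0n rat).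
move: k_gt0 j_gt0; rewrite -!(ler1n rat).
set K := k%:R; set J := j%:R; set N := (Nbin k j)%:R; set N' := (Nbin k j.+1)%:R.
set c := (cbin k j)%:R; set c' := (cbin k j.+1)%:R.
move=> K_ge1 J_ge1 c'_gt0 c_gt0 ec eN.
have -> : N' = N * (2 * K + J) / (K + J + 1) by rewrite -eN mulfK // gt_eqF //; lra.
have -> : c' = c * (K + J) / (J + 1) by rewrite -ec mulfK // gt_eqF //; lra.
by field; rewrite -/K -/J -/c !gt_eqF //; lra.
Qed.

Lemma gap_ratio_le_succ_k k j : (4 <= k)%N -> (0 < j)%N -> gap_ratio k j <= gap_ratio k.+1 j.
Proof.
move=> k_ge4 j_gt0; rewrite gap_ratio_succ_k //; last lia.
by rewrite ler_peMr ?gap_ratio_ge0 // kfactor_ge1 ?(ler_nat _ 4) //.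
Qed.

Lemma gap_ratio_le_succ_diag k : (2 <= k)%N -> gap_ratio k k <= gap_ratio k.+1 k.+1.
Proof.
move=> k_ge2; rewrite gap_ratio_succ_j ?gap_ratio_succ_k //; try lia.
by rewrite -mulrA -natr1 ler_peMr ?gap_ratio_ge0 // kfactor_jfactor_diag_ge1 ?(ler_nat _ 2).
Qed.

Lemma gap_ratio_base j : (1 <= j <= 8)%N -> 2 <= gap_ratio 8 j.
Proof.
move=> /andP[j_ge1 j_le8]; rewrite two_le_gap_ratioE; [| by [] | exact: j_ge1].
have eN i : (Nbin 8 i.+1 * (8 + i + 1))%:R = (Nbin 8 i * (2 * 8 + i))%:R :> rat.
  by rewrite Nbin_succ_j.
have ec i : (cbin 8 i.+1 * (i + 1))%:R = (cbin 8 i * (8 + i))%:R :> rat.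
  by rewrite cbin_succ_j.
(* C(16, 7) = 11440, written as a product: nat literals above 5000 are not unary
   numerals, and lra cannot read them. *)
have eN1 : Nbin 8 1 = (1430 * 8)%N by [].
have ec1 : cbin 8 1 = 8%N by [].
move: eN1 ec1 (eN 1%N) (eN 2%N) (eN 3%N) (eN 4%N) (eN 5%N) (eN 6%N) (eN 7%N)
  (ec 1%N) (ec 2%N) (ec 3%N) (ec 4%N) (ec 5%N) (ec 6%N) (ec 7%N).
(* Abstracted so that lra compares its atoms without evaluating binomials. *)
move: (Nbin 8) (cbin 8) => N c.
move=> /(congr1 (GRing.natmul (1 : rat))) eN1 /(congr1 (GRing.natmul (1 : rat))) ec1.
move: eN1 ec1; rewrite !(natrM, natrD); clear eN ec => *.
case: j j_ge1 j_le8 => [|j] j_ge1 j_le8; first (exfalso; lia).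
do 8 (case: j j_ge1 j_le8 => [|j] j_ge1 j_le8; first lra).
exfalso; lia.
Qed.

Lemma gap_ratio_ge2 k j : (8 <= k)%N -> (1 <= j <= k)%N -> 2 <= gap_ratio k j.
Proof.
move=> k_ge8 /andP[j_ge1 j_le_k].
have le_add_k i m : (4 <= i)%N -> gap_ratio i j <= gap_ratio (i + m) j.
  move=> i_ge4; elim: m => [|m IHm]; first by rewrite addn0 lexx.
  rewrite addnS; apply: le_trans IHm _; apply: gap_ratio_le_succ_k; lia.
have diag m : 2 <= gap_ratio (8 + m) (8 + m).
  elim: m => [|m IHm]; first by apply: gap_ratio_base.
  rewrite addnS; apply: le_trans IHm _; apply: gap_ratio_le_succ_diag; lia.
case: (leqP j 8) => [j_le8 | j_gt8].
  rewrite -(subnKC k_ge8); apply: le_trans _ (le_add_k 8 (k - 8)%N isT).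
  by apply: gap_ratio_base; rewrite j_ge1.
rewrite -(subnKC j_le_k); apply: le_trans _ (le_add_k j (k - j)%N _); last lia.
by rewrite -(subnKC (ltnW j_gt8)) diag.
Qed.

Theorem lemma2p8 (n k : nat) (hk : (8 <= k)%N) (hn1 : (2 * k + 1 <= n)%N)
  (hn2 : (n <= 3 * k)%N) :
  let D : rat := ('C(n - 2, k - 2))%:R + 2 * ('C(n - 3, k - 2))%:R in
  D + h n k ^+ 2 / D > 2 * ('C(n - 1, k - 1))%:R.
Proof.
cbv zeta.
have [j def_n j_range] : exists2 j, n = (2 * k + j)%N & (1 <= j <= k)%N.
  by exists (n - 2 * k)%N; lia.
have k_range : (2 <= k <= n)%N by lia.
have gapE := bin_gap_identity rat k_range.
have := gap_ratio_ge2 hk j_range; rewrite two_le_gap_ratioE; [|lia|lia].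
rewrite /h (_ : n - k - 1 = (k + j).-1)%N; last lia.
rewrite !subn1 def_n -/(Nbin k j) -/(cbin k j) natrD natrM in gapE *.
have K_ge8 : 8 <= k%:R :> rat by rewrite (ler_nat _ 8).
have J_ge1 : 1 <= j%:R :> rat by rewrite ler1n; case/andP: j_range.
apply: gap_lower_bound.
- by rewrite ltr0n bin_gt0; lia.
- by rewrite addr_gt0 ?mulr_gt0 ?ltr0n ?bin_gt0 //; lia.
- by rewrite gt_eqF // mulr_gt0 //; lra.
- by rewrite gapE; congr (_ * _); ring.
Qed.
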